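(* Let $\mathcal{S}\subset\mathbb{R}^3$ be a smooth, closed, orientable surface and let $\mathcal{R}:\mathcal{S}\to(0,\infty)$ be a smooth radius function. Let $p\in\mathcal{S}$ be a point that contributes to the variable-radius offset surface $\mathcal{S}^{\mathrm{off}}_{\mathcal{R}}$, with corresponding offset point $p^{\mathrm{off}}_{\mathcal{R}}$ and offset direction $\boldsymbol{n}^{\mathrm{off}}_{\mathcal{R}}(p)$, and let $\boldsymbol{n}_p$ be the unit normal of $\mathcal{S}$ at $p$ pointing to the side of the offset layer under consideration. If $\|\nabla\mathcal{R}(p)\|\le 1$, then $\boldsymbol{n}^{\mathrm{off}}_{\mathcal{R}}(p)$ is obtained by rotating $\boldsymbol{n}_p$ by the angle $\alpha=\arcsin(\|\nabla\mathcal{R}(p)\|)$ about the axis $$\frac{\nabla\mathcal{R}(p)}{\|\nabla\mathcal{R}(p)\|}\times\boldsymbol{n}_p .$$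
   Context: $\nabla\mathcal{R}(p)$ denotes the surface (tangential) gradient of $\mathcal{R}$ at $p$. The variable-radius offset surface $\mathcal{S}^{\mathrm{off}}_{\mathcal{R}}$ is the zero level set of $\phi(x)=\min_{q\in\mathcal{S}}\big(\|x-q\|-\mathcal{R}(q)\big)$, i.e. the envelope of the family of balls centered at $q\in\mathcal{S}$ with radius $\mathcal{R}(q)$; it consists of an inward and an outward layer. A point $p\in\mathcal{S}$ contributes to $\mathcal{S}^{\mathrm{off}}_{\mathcal{R}}$ if there is a point $p^{\mathrm{off}}_{\mathcal{R}}\in\mathcal{S}^{\mathrm{off}}_{\mathcal{R}}$ on the sphere of center $p$ and radius $\mathcal{R}(p)$ (a point where this sphere touches the envelope), and the offset direction is the unit vector $\boldsymbol{n}^{\mathrm{off}}_{\mathcal{R}}(p)=(p^{\mathrm{off}}_{\mathcal{R}}-p)/\|p^{\mathrm{off}}_{\mathcal{R}}-p\|$. Rotation about an axis is by the right-hand rule; when $\nabla\mathcal{R}(p)=0$ the angle $\alpha$ is $0$ and the rotation is the identity. *)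

From HB Require Import structures.
From mathcomp Require Import all_boot all_order all_algebra.
From mathcomp Require Import all_classical all_reals all_analysis.
Set Implicit Arguments. Unset Strict Implicit. Unset Printing Implicit Defensive.
Import Order.TTheory GRing.Theory Num.Theory.
Import numFieldNormedType.Exports.
Local Open Scope classical_set_scope.
Local Open Scope ring_scope.

Section OffsetDefs.
Variable R : realType.

Notation vec3 := 'rV[R]_3.

Definition dot (u v : vec3) : R := \sum_(i < 3) u 0 i * v 0 i.
Definition enorm (u : vec3) : R := Num.sqrt (dot u u).
Definition cross (u v : vec3) : vec3 :=
  let c := fun (w : vec3) (k : nat) => w 0 (inord k) in
  \row_(i < 3) (match (val i)%N with
                | O => c u 1 * c v 2 - c u 2 * c v 1
                | S O => c u 2 * c v 0 - c u 0 * c v 2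
                | _ => c u 0 * c v 1 - c u 1 * c v 0 end).

Definition ebase (i : 'I_3) : vec3 := \row_(j < 3) (if j == i then 1 else 0).

Fixpoint iterD (vs : seq vec3) (f : vec3 -> R) : vec3 -> R :=
  match vs with
  | [::] => f
  | v :: vs' => fun x => derive (iterD vs' f) x v
  end.

Definition smooth (f : vec3 -> R) : Prop :=
  forall (vs : seq vec3) (x : vec3), differentiable (iterD vs f) x.

Definition grad (f : vec3 -> R) (x : vec3) : vec3 :=
  \row_(i < 3) derive f x (ebase i).

(** Smooth closed orientable surface, presented as a compact regular
    level set S = F^{-1}(0) of a smooth F : R^3 -> R. *)
Definition regular_compact_level_set (F : vec3 -> R) : Prop :=
  [/\ smooth F,
      (forall x, F x = 0 -> grad F x != 0) &
      compact [set x | F x = 0]].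

Definition unormal (F : vec3 -> R) (p : vec3) : vec3 :=
  (enorm (grad F p))^-1 *: grad F p.

(** Surface (tangential) gradient at p of a function on S, given through a
    smooth extension Rad : R^3 -> R: projection of the ambient gradient on
    the tangent plane (independent of the extension). *)
Definition surf_grad (F Rad : vec3 -> R) (p : vec3) : vec3 :=
  grad Rad p - dot (grad Rad p) (unormal F p) *: unormal F p.

(** phi(x) = min_{q in S} (|x - q| - Rad(q)) (the min exists by compactness;
    we write it as an infimum). *)
Definition offset_phi (F Rad : vec3 -> R) (x : vec3) : R :=
  inf [set enorm (x - q) - Rad q | q in [set q | F q = 0]].

Definition offset_surface (F Rad : vec3 -> R) : set vec3 :=
  [set x | offset_phi F Rad x = 0].

Definition offset_dir (p poff : vec3) : vec3 :=
  (enorm (poff - p))^-1 *: (poff - p).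

(** Right-hand rotation of v by angle a about the axis spanned by [axis]
    (Rodrigues' formula with the normalized axis); identity if axis = 0. *)
Definition rotate (axis : vec3) (a : R) (v : vec3) : vec3 :=
  if axis == 0 then v else
  let k := (enorm axis)^-1 *: axis in
  cos a *: v + sin a *: cross k v + ((1 - cos a) * dot k v) *: k.

End OffsetDefs.

From HB Require Import structures.
From mathcomp Require Import all_boot all_order all_algebra.
From mathcomp Require Import all_classical all_reals all_analysis.
From mathcomp Require Import ring lra.
Import Order.TTheory GRing.Theory Num.Theory.
Import numFieldNormedType.Exports.
Local Open Scope classical_set_scope.
Local Open Scope ring_scope.

(* Since [poff] lies on the envelope, [Rad q <= |poff - q|] for every [q] on
   S, with equality at [p]; so [p] minimises [h q = |poff - q|^2 - Rad q^2]
   on S, and the first-order condition at this constrained minimum says that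
   [poff - p + Rad p * grad Rad p] is normal to S.  The implicit function
   theorem is avoided: near [p + t v], with [v] tangent, a point of S is
   found on the normal line by the intermediate value theorem.  Writing the
   unit vector [(poff - p) / Rad p] as [c n - g], with [g] the surface
   gradient, [c^2 + |g|^2 = 1] and the side condition fixes the sign of [c],
   so the offset direction is [sqrt (1 - |g|^2) np - g]: this is [np] rotated
   by [asin |g|] about [(g / |g|) x np]. *)

Section Vec3.
Set Implicit Arguments. Unset Strict Implicit.
Variable R : realType.
Notation vec3 := 'rV[R]_3.

Let i0 : 'I_3 := @Ordinal 3 0 isT.
Let i1 : 'I_3 := @Ordinal 3 1 isT.
Let i2 : 'I_3 := @Ordinal 3 2 isT.

Lemma dotE (u v : vec3) :
  dot u v = u 0 i0 * v 0 i0 + u 0 i1 * v 0 i1 + u 0 i2 * v 0 i2.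
Proof.
rewrite /dot !big_ord_recr big_ord0 /= add0r.
by congr (_ * _ + _ * _ + _ * _); congr (_ _ _); apply: val_inj.
Qed.

Lemma vec3P (u v : vec3) :
  u 0 i0 = v 0 i0 -> u 0 i1 = v 0 i1 -> u 0 i2 = v 0 i2 -> u = v.
Proof.
move=> e0 e1 e2; apply/rowP => -[[|[|[|//]]] lti].
- by rewrite (_ : Ordinal lti = i0) //; apply: val_inj.
- by rewrite (_ : Ordinal lti = i1) //; apply: val_inj.
- by rewrite (_ : Ordinal lti = i2) //; apply: val_inj.
Qed.

Lemma crossE (u v : vec3) :
  [/\ cross u v 0 i0 = u 0 i1 * v 0 i2 - u 0 i2 * v 0 i1,
      cross u v 0 i1 = u 0 i2 * v 0 i0 - u 0 i0 * v 0 i2 &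
      cross u v 0 i2 = u 0 i0 * v 0 i1 - u 0 i1 * v 0 i0].
Proof.
have e0 : inord 0 = i0 by apply: val_inj; rewrite /= inordK.
have e1 : inord 1 = i1 by apply: val_inj; rewrite /= inordK.
have e2 : inord 2 = i2 by apply: val_inj; rewrite /= inordK.
by rewrite /cross !mxE /= e0 e1 e2.
Qed.

Lemma dotC (u v : vec3) : dot u v = dot v u.
Proof. by rewrite !dotE; ring. Qed.

Lemma dotDl (u v w : vec3) : dot (u + v) w = dot u w + dot v w.
Proof. by rewrite !dotE !mxE; ring. Qed.

Lemma dotBl (u v w : vec3) : dot (u - v) w = dot u w - dot v w.
Proof. by rewrite !dotE !mxE; ring. Qed.

Lemma dotNl (u v : vec3) : dot (- u) v = - dot u v.
Proof. by rewrite !dotE !mxE; ring. Qed.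

Lemma dotZl (k : R) (u v : vec3) : dot (k *: u) v = k * dot u v.
Proof. by rewrite !dotE !mxE; ring. Qed.

Lemma dotZr (k : R) (u v : vec3) : dot u (k *: v) = k * dot u v.
Proof. by rewrite !dotE !mxE; ring. Qed.

Lemma dot_ge0 (u : vec3) : 0 <= dot u u.
Proof. by rewrite dotE; nra. Qed.

Lemma dot_eq0 (u : vec3) : (dot u u == 0) = (u == 0).
Proof.
apply/eqP/eqP => [|->]; last by rewrite dotE !mxE; ring.
by rewrite dotE => uu0; apply: vec3P; rewrite mxE; nra.
Qed.

Lemma dot_gt0 (u : vec3) : u != 0 -> 0 < dot u u.
Proof. by rewrite -dot_eq0 lt_def dot_ge0 andbT. Qed.

Lemma enorm_sqr (u : vec3) : enorm u ^+ 2 = dot u u.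
Proof. by rewrite sqr_sqrtr // dot_ge0. Qed.

Lemma enorm_ge0 (u : vec3) : 0 <= enorm u.
Proof. exact: sqrtr_ge0. Qed.

Lemma enorm_eq0 (u : vec3) : (enorm u == 0) = (u == 0).
Proof. by rewrite sqrtr_eq0 le_eqVlt ltNge dot_ge0 orbF dot_eq0. Qed.

Lemma dot_normalized (u : vec3) : u != 0 -> dot ((enorm u)^-1 *: u) ((enorm u)^-1 *: u) = 1.
Proof.
by rewrite -enorm_eq0 => u0; rewrite dotZl dotZr -enorm_sqr; field.
Qed.

Lemma dot_cross_r (u v : vec3) : dot (cross u v) v = 0.
Proof. by rewrite dotE; have [-> -> ->] := crossE u v; ring. Qed.

Lemma cross_cross_r (u v : vec3) : cross (cross u v) v = dot u v *: v - dot v v *: u.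
Proof.
have [e0 e1 e2] := crossE u v; have [f0 f1 f2] := crossE (cross u v) v.
by apply: vec3P; rewrite ?f0 ?f1 ?f2 ?e0 ?e1 ?e2 !mxE !dotE; ring.
Qed.

Lemma lagrange_identity (u v : vec3) :
  dot (cross u v) (cross u v) = dot u u * dot v v - dot u v ^+ 2.
Proof. by rewrite !dotE; have [-> -> ->] := crossE u v; ring. Qed.

(* [`|w|] is the max-norm of MathComp matrices, not the Euclidean [enorm]. *)
Lemma dot_le_mx_norm (w : vec3) : dot w w <= 3 * `|w| ^+ 2.
Proof.
have sqr_le i : w 0 i * w 0 i <= `|w| ^+ 2.
  have wi : `|w 0 i| <= `|w|.
    change (`|w 0 i| <= mx_norm w); rewrite mx_normrE.
    exact: (le_bigmax _ (fun ij : 'I_1 * 'I_3 => `|w ij.1 ij.2|) (0, i)).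
  rewrite -expr2 -real_normK ?num_real //.
  by rewrite lerXn2r ?nnegrE ?normr_ge0 ?(le_trans (normr_ge0 _) wi).
by rewrite dotE; have := sqr_le i0; have := sqr_le i1; have := sqr_le i2; lra.
Qed.

Lemma rotate_orthonormal (a b : vec3) (th : R) :
  dot a a = 1 -> dot b b = 1 -> dot a b = 0 ->
  rotate (cross a b) th b = cos th *: b - sin th *: a.
Proof.
move=> aa bb ab; have kk : dot (cross a b) (cross a b) = 1.
  by rewrite lagrange_identity aa bb ab; ring.
have k0 : cross a b != 0 by rewrite -dot_eq0 kk oner_eq0.
rewrite /rotate (negbTE k0) /enorm kk sqrtr1 invr1 scale1r.
rewrite cross_cross_r dot_cross_r ab bb mulr0 !scale0r addr0 sub0r scale1r.
by rewrite scalerN.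
Qed.

Lemma rotate_asin (u b : vec3) :
  dot b b = 1 -> dot u b = 0 -> enorm u <= 1 ->
  rotate (cross ((enorm u)^-1 *: u) b) (asin (enorm u)) b =
    Num.sqrt (1 - enorm u ^+ 2) *: b - u.
Proof.
move=> bb ub u1; have [->|u0] := eqVneq u 0.
  have /eqP -> : enorm (0 : vec3) == 0 by rewrite enorm_eq0.
  rewrite scaler0 /rotate (_ : cross 0 b = 0) ?eqxx.
    by rewrite expr2 mulr0 !subr0 sqrtr1 scale1r.
  by have [e0 e1 e2] := crossE 0 b; apply: vec3P; rewrite ?e0 ?e1 ?e2 !mxE; ring.
have g01 : -1 <= enorm u <= 1 by rewrite u1 andbT (le_trans _ (enorm_ge0 u)) // lerN10.
rewrite rotate_orthonormal ?dot_normalized // ?dotZl ?ub ?mulr0 //.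
by rewrite cos_asin // asinK ?in_itv //= scalerA mulfV ?enorm_eq0 // scale1r.
Qed.

(* [L] is a Frechet supergradient of [h] at [p]: this one-sided expansion is
   all the first-order condition at a minimum needs. *)
Definition supergradient (h : vec3 -> R) (p L : vec3) : Prop :=
  forall e, 0 < e -> \forall w \near (0 : vec3), h (w + p) - h p <= dot L w + e * `|w|.

Lemma diff_dot_grad (f : vec3 -> R) (x h : vec3) :
  differentiable f x -> 'd f x h = dot h (grad f x).
Proof.
move=> df; rewrite {1}(_ : h = \sum_(i < 3) h 0 i *: ebase R i); last first.
  apply/rowP => j; rewrite summxE (bigD1 j) //= big1 ?addr0.
    by rewrite !mxE eqxx mulr1.
  by move=> i /negbTE ij; rewrite !mxE eq_sym ij mulr0.
rewrite linear_sum /dot; apply: eq_bigr => i _.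
by rewrite linearZ /= /grad !mxE -deriveE.
Qed.

Lemma differentiable_grad_approx (f : vec3 -> R) (p : vec3) :
  differentiable f p -> forall e, 0 < e ->
  \forall w \near (0 : vec3), `|f (w + p) - f p - dot w (grad f p)| <= e * `|w|.
Proof.
move=> df e e0; have := (eqaddoP _ _ _ _).1 (diff_locally df) e e0.
by apply: filterS => w; rewrite -diff_dot_grad // opprD addrA.
Qed.

Lemma supergradient_dist2_sub_sqr (x p : vec3) (f : vec3 -> R) :
  differentiable f p -> 0 <= f p ->
  supergradient (fun q => dot (x - q) (x - q) - f q ^+ 2) p
                (- 2 *: (x - p + f p *: grad f p)).
Proof.
move=> df r0 e e0; set r := f p in r0 *; set G := grad f p; set D := x - p.
have e1 : 0 < e / (4 * r + 1) by rewrite divr_gt0 //; lra.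
have e6 : 0 < e / 6 by rewrite divr_gt0.
near=> w.
have wsmall : `|w| < e / 6 by near: w; exact: (nbhs0_lt (V := vec3) e6).
have /ler_normlP[+ _] : `|f (w + p) - r - dot w G| <= e / (4 * r + 1) * `|w|.
  by near: w; exact: differentiable_grad_approx.
set X := f (w + p); set a := dot w G => Xlow.
have expand : dot (x - (w + p)) (x - (w + p)) = dot D D - 2 * dot D w + dot w w.
  by rewrite /D !dotE !mxE; ring.
have lin : dot (- 2 *: (D + r *: G)) w = - 2 * dot D w - 2 * r * a.
  by rewrite /a dotZl dotDl dotZl (dotC G); ring.
have ww : dot w w <= e / 2 * `|w|.
  apply: (le_trans (dot_le_mx_norm w)); rewrite expr2 mulrA.
  by apply: ler_wpM2r => //; lra.
(* Convexity of the square turns the lower bound on [f] into an upper bound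
   on [- f ^+ 2]; the sign of [f] near [p] does not matter. *)
have convex : r ^+ 2 + 2 * r * (X - r) <= X ^+ 2.
  by have := sqr_ge0 (X - r); rewrite !expr2; lra.
have rX : r * (- (e / (4 * r + 1) * `|w|)) <= r * (X - r - a).
  by apply: ler_wpM2l; lra.
have re : 2 * r * (e / (4 * r + 1)) <= e / 2.
  have ek : e / (4 * r + 1) * (4 * r + 1) = e by rewrite divfK // gt_eqF //; lra.
  nra.
have := normr_ge0 w; rewrite expand lin; nra.
Unshelve. all: by end_near.
Qed.

Lemma norm_comb_le (t u : R) (v N : vec3) :
  0 <= t -> `|t *: v + u *: N| <= t * `|v| + `|u| * `|N|.
Proof.
by move=> t0; rewrite (le_trans (ler_normD _ _)) // !normrZ (ger0_norm t0).
Qed.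

Lemma level_set_tangent_points (F : vec3 -> R) (p v : vec3) :
  continuous F -> differentiable F p -> F p = 0 -> grad F p != 0 ->
  dot v (grad F p) = 0 ->
  forall e, 0 < e -> exists2 d, 0 < d & forall t, 0 < t < d ->
    exists2 u, `|u| <= e * t & F (t *: v + u *: grad F p + p) = 0.
Proof.
move=> cF dF Fp0 N0 vN e e0; set N := grad F p in N0 vN *.
have m0 : 0 < dot N N by exact: dot_gt0.
have B0 : 0 < `|v| + e * `|N|.
  by rewrite ltr_wpDl // mulr_gt0 // normr_gt0.
set B := `|v| + e * `|N| in B0 *.
have eps0 : 0 < e * dot N N / (2 * B) by rewrite divr_gt0 ?mulr_gt0.
have [d1 d10 approx] := nbhs_norm0P.1 (differentiable_grad_approx dF eps0).
exists (d1 / B); first exact: divr_gt0.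
move=> t /andP[t0 tdB]; rewrite ltr_pdivlMr // in tdB.
(* [F] changes sign along the normal segment through [p + t v]. *)
pose phi u := F (t *: v + u *: N + p).
have phi_approx u : `|u| <= e * t -> `|phi u - u * dot N N| <= e * t * dot N N / 2.
  move=> ut; have wB : `|t *: v + u *: N| <= t * B.
    rewrite (le_trans (norm_comb_le _ _ _ (ltW t0))) // /B mulrDr lerD2l.
    by rewrite mulrA ler_wpM2r // mulrC.
  have -> : e * t * dot N N / 2 = e * dot N N / (2 * B) * (t * B).
    by field; rewrite gt_eqF.
  have := approx _ (le_lt_trans wB tdB).
  rewrite /= Fp0 subr0 -/N dotDl !dotZl vN mulr0 add0r => /le_trans; apply.
  by apply: ler_wpM2l => //; exact: ltW.
have et0 : 0 < e * t by exact: mulr_gt0.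
have etm : 0 < e * t * dot N N by rewrite !mulr_gt0.
have phi_pos : 0 < phi (e * t).
  have := phi_approx (e * t); rewrite ger0_norm ?(ltW et0) // lexx => /(_ isT).
  by rewrite ler_norml => /andP[+ _]; lra.
have phi_neg : phi (- (e * t)) < 0.
  have := phi_approx (- (e * t)); rewrite normrN ger0_norm ?(ltW et0) // lexx.
  by move=> /(_ isT); rewrite ler_norml => /andP[_]; lra.
have phi_cont : {within `[- (e * t), e * t], continuous phi}.
  apply: continuous_subspaceT => u; apply: continuous_comp; last exact: cF.
  apply: continuousD; last exact: cst_continuous.
  apply: continuousD; first exact: cst_continuous.
  by apply: continuousZr_tmp; exact: cvg_id.
have sign_change : Num.min (phi (- (e * t))) (phi (e * t)) <= 0 <=
                   Num.max (phi (- (e * t))) (phi (e * t)).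
  by rewrite ge_min le_max (ltW phi_neg) (ltW phi_pos) orbT.
have et_itv : - (e * t) <= e * t by lra.
have [u ut phiu0] := IVT et_itv phi_cont sign_change.
by exists u; rewrite // ler_norml; move: ut; rewrite in_itv.
Qed.

Lemma constrained_min_tangent_ge0 (F h : vec3 -> R) (p L v : vec3) :
  continuous F -> differentiable F p -> F p = 0 -> grad F p != 0 ->
  (forall q, F q = 0 -> h p <= h q) -> supergradient h p L ->
  dot v (grad F p) = 0 -> 0 <= dot L v.
Proof.
move=> cF dF Fp0 N0 hmin hL vN; set N := grad F p in N0 vN *.
have LN_ge0 := normr_ge0 (dot L N); have v_ge0 := normr_ge0 v.
have N_ge0 := normr_ge0 N.
set K := `|dot L N| + `|v| + `|N| + 1.
have K0 : 0 < K by rewrite /K; lra.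
rewrite -oppr_le0; apply/ler_addgt0Pr => e e0; rewrite add0r.
set de := Num.min 1 (e / K).
have de0 : 0 < de by rewrite lt_min ltr01 divr_gt0.
have de1 : de <= 1 by rewrite ge_min lexx.
have deK : de * K <= e by rewrite -ler_pdivlMr // ge_min lexx orbT.
have [d1 d10 curve] := level_set_tangent_points cF dF Fp0 N0 vN de0.
have [d2 d20 expand] := nbhs_norm0P.1 (hL _ de0).
have B0 : 0 < `|v| + `|N| + 1 by lra.
set t := Num.min (d1 / 2) (d2 / (`|v| + `|N| + 1)).
have t0 : 0 < t by rewrite lt_min !divr_gt0.
have td1 : t < d1.
  have : d1 / 2 < d1 by rewrite ltr_pdivrMr // ltr_pMr // ltr1n.
  by apply: le_lt_trans; rewrite ge_min lexx.
have tB : t * (`|v| + `|N| + 1) <= d2.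
  by rewrite -ler_pdivlMr // ge_min lexx orbT.
have [|u ut Fw0] := curve t; first by rewrite t0 td1.
set w := t *: v + u *: N.
have wt : `|w| <= t * (`|v| + `|N|).
  rewrite (le_trans (norm_comb_le _ _ _ (ltW t0))) // mulrDr lerD2l.
  by rewrite ler_wpM2r // (le_trans ut) // ler_piMl // ltW.
have w_lt : `|w| < d2.
  by rewrite (le_lt_trans wt) // (lt_le_trans _ tB) // ltr_pM2l // ltrDl.
have h0 : 0 <= dot L w + de * `|w|.
  by have := expand _ w_lt; have := hmin _ Fw0; rewrite /=; lra.
have Lw : dot L w = t * dot L v + u * dot L N.
  by rewrite /w !dotE !mxE; ring.
have uLN : u * dot L N <= t * (de * `|dot L N|).
  by rewrite (le_trans (ler_norm _)) // normrM mulrA (mulrC t) ler_wpM2r.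
have dew : de * `|w| <= de * (t * (`|v| + `|N|)).
  by apply: ler_wpM2l => //; exact: ltW.
have : 0 <= t * (dot L v + de * K) by rewrite /K; nra.
rewrite pmulr_rge0 //; lra.
Qed.

Lemma constrained_min_orthogonal (F h : vec3 -> R) (p L v : vec3) :
  continuous F -> differentiable F p -> F p = 0 -> grad F p != 0 ->
  (forall q, F q = 0 -> h p <= h q) -> supergradient h p L ->
  dot v (grad F p) = 0 -> dot L v = 0.
Proof.
move=> cF dF Fp0 N0 hmin hL vN; apply/eqP; rewrite eq_le.
have vN' : dot (- v) (grad F p) = 0 by rewrite dotNl vN oppr0.
have := constrained_min_tangent_ge0 cF dF Fp0 N0 hmin hL vN'.
rewrite (dotC L) dotNl (dotC v) oppr_ge0 => -> /=.
exact: constrained_min_tangent_ge0 cF dF Fp0 N0 hmin hL vN.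
Qed.

Lemma offset_phi_le (F Rad : vec3 -> R) (x q : vec3) :
  compact [set q | F q = 0] -> continuous Rad -> F q = 0 ->
  offset_phi F Rad x <= enorm (x - q) - Rad q.
Proof.
move=> cS cRad Fq; apply: ge_inf; last by exists q.
have cRadS : {within [set q | F q = 0], continuous Rad}.
  by apply: continuous_subspaceT.
have [M [_ RadM]] := compact_bounded (continuous_compact cRadS cS).
exists (- (M + 1)) => _ [q' Fq' <-].
have : `|Rad q'| <= M + 1 by apply: RadM; [rewrite ltrDl | exists q'].
by move/ler_normlW; have := enorm_ge0 (x - q'); lra.
Qed.

Lemma offset_contact_min (F Rad : vec3 -> R) (p poff q : vec3) :
  compact [set q | F q = 0] -> continuous Rad ->
  (forall q, F q = 0 -> 0 < Rad q) -> poff \in offset_surface F Rad ->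
  enorm (poff - p) = Rad p -> F q = 0 ->
  dot (poff - p) (poff - p) - Rad p ^+ 2 <= dot (poff - q) (poff - q) - Rad q ^+ 2.
Proof.
move=> cS cRad Rad_gt0 off Dp Fq; have := offset_phi_le poff cS cRad Fq.
move: off; rewrite inE /offset_surface /= => -> Rad_le.
rewrite -!enorm_sqr Dp subrr subr_ge0 lerXn2r ?nnegrE ?enorm_ge0 //.
  exact/ltW/Rad_gt0.
by lra.
Qed.

Lemma orthogonal_parallel (n X : vec3) :
  dot n n = 1 -> (forall v, dot v n = 0 -> dot X v = 0) -> X = dot X n *: n.
Proof.
move=> nn Xn; set v := X - dot X n *: n.
have vn : dot v n = 0 by rewrite dotBl dotZl nn mulr1 subrr.
have : dot v v = 0 by rewrite {1}/v dotBl (Xn _ vn) dotZl (dotC n) vn mulr0 subrr.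
by move/eqP; rewrite dot_eq0 subr_eq0 => /eqP.
Qed.

Lemma offset_dir_decomposition (n G D : vec3) (r s : R) :
  dot n n = 1 -> 0 < r -> enorm D = r -> (s = 1 \/ s = -1) ->
  0 <= dot (s *: n) D -> (forall v, dot v n = 0 -> dot (D + r *: G) v = 0) ->
  let g := G - dot G n *: n in
  r^-1 *: D = Num.sqrt (1 - enorm g ^+ 2) *: (s *: n) - g.
Proof.
move=> nn r0 Dr s_sign side normal g.
have gn : dot g n = 0 by rewrite dotBl dotZl nn mulr1 subrr.
set c := dot (D + r *: G) n / r - dot G n.
have Dcg : r^-1 *: D = c *: n - g.
  have DX : D = dot (D + r *: G) n *: n - r *: G.
    by rewrite -(orthogonal_parallel nn normal) addrK.
  by rewrite {1}DX /c /g; apply: vec3P; rewrite !mxE; field; rewrite gt_eqF.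
have c_unit : c ^+ 2 + dot g g = 1.
  have expand : dot (c *: n - g) (c *: n - g) =
                c ^+ 2 * dot n n - 2 * c * dot g n + dot g g.
    by rewrite !dotE !mxE; ring.
  have : dot (r^-1 *: D) (r^-1 *: D) = 1.
    by rewrite dotZl dotZr -enorm_sqr Dr; field; rewrite gt_eqF.
  by rewrite Dcg expand nn gn; lra.
have sc_ge0 : 0 <= s * c.
  move: side; have -> : D = r *: (c *: n - g).
    by rewrite -Dcg scalerA mulfV ?gt_eqF // scale1r.
  rewrite dotZl dotZr (dotC n) dotBl dotZl nn gn mulr1 subr0.
  by rewrite mulrCA pmulr_rge0.
have ss : s * s = 1 by case: s_sign => ->; rewrite ?mulrNN mulr1.
have -> : Num.sqrt (1 - enorm g ^+ 2) = s * c.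
  have -> : 1 - enorm g ^+ 2 = (s * c) ^+ 2.
    by rewrite enorm_sqr exprMn -[s ^+ 2]/(s * s) ss mul1r; lra.
  by rewrite sqrtr_sqr ger0_norm.
by rewrite Dcg scalerA mulrC mulrA ss mul1r.
Qed.

End Vec3.

Theorem theorem1 (R : realType) (F Rad : 'rV[R]_3 -> R)
  (HS : regular_compact_level_set F)
  (HRad : smooth Rad) (Hpos : forall q, F q = 0 -> 0 < Rad q)
  (p poff : 'rV[R]_3) (Hp : F p = 0)
  (Hoff : poff \in offset_surface F Rad)
  (Hsph : enorm (poff - p) = Rad p)
  (s : R) (Hs : s = 1 \/ s = -1)
  (Hside : 0 <= dot (s *: unormal F p) (poff - p))
  (Hgrad : enorm (surf_grad F Rad p) <= 1) :
  let np := s *: unormal F p in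
  let g := surf_grad F Rad p in
  offset_dir p poff =
    rotate (cross ((enorm g)^-1 *: g) np) (asin (enorm g)) np.
Proof.
move=> np g; have [sF NF cS] := HS; have N0 := NF p Hp.
have dF x : differentiable F x := sF [::] x.
have dRad x : differentiable Rad x := HRad [::] x.
have cF : continuous F := fun x => differentiable_continuous (dF x).
have cRad : continuous Rad := fun x => differentiable_continuous (dRad x).
have hmin := offset_contact_min cS cRad Hpos Hoff Hsph.
have normal v : dot v (unormal F p) = 0 ->
    dot (poff - p + Rad p *: grad Rad p) v = 0.
  move=> /eqP; rewrite dotZr mulf_eq0 invr_eq0 enorm_eq0 (negbTE N0) /= => /eqP vN.
  have := constrained_min_orthogonal cF (dF p) Hp N0 hmin
            (supergradient_dist2_sub_sqr poff (dRad p) (ltW (Hpos p Hp))) vN.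
  by rewrite dotZl => /eqP; rewrite mulf_eq0 oppr_eq0 pnatr_eq0 => /eqP.
have nn : dot (unormal F p) (unormal F p) = 1 := dot_normalized N0.
have decomp : (Rad p)^-1 *: (poff - p) = Num.sqrt (1 - enorm g ^+ 2) *: np - g :=
  offset_dir_decomposition nn (Hpos p Hp) Hsph Hs Hside normal.
have npnp : dot np np = 1.
  by rewrite dotZl dotZr nn mulr1; case: Hs => ->; rewrite ?mulrNN mulr1.
have gnp : dot g np = 0 by rewrite dotZr dotBl dotZl nn mulr1 subrr mulr0.
by rewrite /offset_dir Hsph decomp rotate_asin.
Qed.
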